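(* Let $Q$ be a groupoid quantale with base locale $A$ and let $X$ be a $Q$-locale. Then for all $q\in Q$ and $z\in X$, $$\varsigma_Q(q)\triangleright z=q\cdot1_X\wedge z.$$
   Context: Let $A$ be a locale. A groupoid quantale $Q$ (base locale $A$) is an involutive quantale which is an $A$-$A$-bimodule (actions $a\triangleright q$, $q\triangleleft a$) with $(a\triangleright x)y=a\triangleright(xy)$, $(x\triangleleft a)y=x(a\triangleright y)$, $(xy)\triangleleft a=x(y\triangleleft a)$, $(a\triangleright x\triangleleft b)^*=b\triangleright x^*\triangleleft a$; a frame with $(a\triangleright q)\wedge m=a\triangleright(q\wedge m)$, $m\wedge(q\triangleleft a)=(q\wedge m)\triangleleft a$; equipped with a sup-lattice homomorphism $\varsigma_Q:Q\to A$ with $\varsigma_Q(1_Q)=1_A$, $\varsigma_Q(x)\triangleright y\le xx^*y$, $\varsigma_Q(x)\triangleright x=x$, $\varsigma_Q(a\triangleright x)=a\wedge\varsigma_Q(x)$, and a frame homomorphism $\upsilon:Q\to A$ with $\upsilon(a\triangleright1_Q)=a=\upsilon(1_Q\triangleleft a)$; the right adjoint of $Q\otimes_AQ\to Q$ preserves joins; and $\bigvee_{xy\le a}\upsilon(x)\triangleright y=a$, $\upsilon(a)\triangleright1_Q=\bigvee_{xx^*\le a}x$. A $Q$-module is a locale $X$ with a left $Q$-action $q\cdot x$ and unital left $A$-module structure $a\triangleright x$ with $(a\triangleright q)\cdot x=a\triangleright(q\cdot x)$, $(q\triangleleft a)\cdot x=q\cdot(a\triangleright x)$, $a\triangleright(x\wedge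 y)=(a\triangleright x)\wedge y$. A pre-Hilbert $Q$-module has $\langle-,-\rangle:X\times X\to Q$ with $\langle q\cdot x,y\rangle=q\langle x,y\rangle$, $a\triangleright\langle x,1_X\rangle=\langle a\triangleright x,1_X\rangle$, $\langle\bigvee x_\alpha,y\rangle=\bigvee\langle x_\alpha,y\rangle$, $\langle x,y\rangle=\langle y,x\rangle^*$. A stably supported $Q$-module has in addition a monotone $\varsigma_X:X\to A$ with $\varsigma_X(1_X)=1_A$, $\varsigma_X(x)\triangleright1_X\le\langle x,x\rangle\cdot1_X$, $\varsigma_X(x)\triangleright x=x$, $\varsigma_X(q\cdot x)\le\varsigma_Q(q)$. With $Q\otimes_AX$ the quotient of $Q\otimes X$ by $(q\triangleleft a)\otimes x=q\otimes(a\triangleright x)$, a $Q$-locale is a stably supported $Q$-module such that the map $\alpha_*:X\to Q\otimes_AX$, $\alpha_*(x)=\bigvee_{q\cdot y\le x}q\otimes y$, preserves arbitrary joins, and $\bigvee_{q\cdot y\le x}\upsilon(q)\triangleright y=x$ for all $x\in X$. *)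

Set Implicit Arguments.
Unset Strict Implicit.

Record frame := Frame {
  fcar :> Type;
  fle : fcar -> fcar -> Prop;
  fsup : (fcar -> Prop) -> fcar;
  fmeet : fcar -> fcar -> fcar;
  fle_refl : forall x, fle x x;
  fle_trans : forall x y z, fle x y -> fle y z -> fle x z;
  fle_anti : forall x y, fle x y -> fle y x -> x = y;
  fsup_ub : forall (S : fcar -> Prop) x, S x -> fle x (fsup S);
  fsup_least : forall (S : fcar -> Prop) b, (forall x, S x -> fle x b) -> fle (fsup S) b;
  fmeet_glb : forall a b c, fle c (fmeet a b) <-> (fle c a /\ fle c b);
  fmeet_distr : forall a (S : fcar -> Prop),
      fmeet a (fsup S) = fsup (fun y => exists x, S x /\ y = fmeet a x)
}.
Arguments fle {f}.
Arguments fsup {f}.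
Arguments fmeet {f}.

Definition ftop (L : frame) : L := fsup (fun _ : L => True).

Definition img {T U : Type} (f : T -> U) (S : T -> Prop) : U -> Prop :=
  fun u => exists t, S t /\ u = f t.

Definition sup_hom (L M : frame) (f : L -> M) : Prop :=
  forall S : L -> Prop, f (fsup S) = fsup (img f S).

Definition frame_hom (L M : frame) (f : L -> M) : Prop :=
  sup_hom f /\ (forall x y, f (fmeet x y) = fmeet (f x) (f y)) /\ f (ftop L) = ftop M.

Definition is_involutive_quantale (Q : frame) (mul : Q -> Q -> Q) (inv : Q -> Q) : Prop :=
  (forall x y z, mul (mul x y) z = mul x (mul y z)) /\
  (forall x (S : Q -> Prop), mul x (fsup S) = fsup (img (mul x) S)) /\
  (forall (S : Q -> Prop) y, mul (fsup S) y = fsup (img (fun s => mul s y) S)) /\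
  (forall x, inv (inv x) = x) /\
  (forall x y, inv (mul x y) = mul (inv y) (inv x)) /\
  (forall S : Q -> Prop, inv (fsup S) = fsup (img inv S)).

Definition is_left_Amod (A M : frame) (lact : A -> M -> M) : Prop :=
  (forall a (S : M -> Prop), lact a (fsup S) = fsup (img (lact a) S)) /\
  (forall (T : A -> Prop) m, lact (fsup T) m = fsup (img (fun a => lact a m) T)) /\
  (forall a b m, lact (fmeet a b) m = lact a (lact b m)).

Definition is_right_Amod (A M : frame) (ract : M -> A -> M) : Prop :=
  (forall (S : M -> Prop) a, ract (fsup S) a = fsup (img (fun m => ract m a) S)) /\
  (forall m (T : A -> Prop), ract m (fsup T) = fsup (img (ract m) T)) /\
  (forall a b m, ract m (fmeet a b) = ract (ract m a) b).

Definition is_unital_left_Amod (A M : frame) (lact : A -> M -> M) : Prop :=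
  is_left_Amod lact /\ (forall m, lact (ftop A) m = m).

Definition is_AA_bimod (A M : frame) (lact : A -> M -> M) (ract : M -> A -> M) : Prop :=
  is_left_Amod lact /\ is_right_Amod ract /\
  (forall a m b, ract (lact a m) b = lact a (ract m b)).

(* Tensor product M (x)_A N of a right A-module M and a left A-module N,
   i.e. the quotient of the sup-lattice tensor product M (x) N by the
   relations (m <| a) (x) n = m (x) (a |> n).  Elements of M (x) N are
   represented (Joyal--Tierney) as the subsets D of M x N that are down-closed
   and closed under joins in each variable separately (D = {(m,n) | m(x)n <= t});
   elements of the quotient are those that are moreover balanced.  The order
   is inclusion. *)
Section Tensor.
Variables (A M N : frame) (ract : M -> A -> M) (lact : A -> N -> N).

Definition tclosed (D : M -> N -> Prop) : Prop :=
  (forall m n m' n', D m n -> fle m' m -> fle n' n -> D m' n') /\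
  (forall (S : M -> Prop) n, (forall m, S m -> D m n) -> D (fsup S) n) /\
  (forall m (S : N -> Prop), (forall n, S n -> D m n) -> D m (fsup S)) /\
  (forall m a n, D (ract m a) n <-> D m (lact a n)).

Definition tjoin (F : (M -> N -> Prop) -> Prop) : M -> N -> Prop :=
  fun m n => forall D, tclosed D ->
    (forall E, F E -> forall m' n', E m' n' -> D m' n') -> D m n.

Definition tpure (m : M) (n : N) : M -> N -> Prop :=
  fun m' n' => forall D, tclosed D -> D m n -> D m' n'.

Definition teq (D E : M -> N -> Prop) : Prop := forall m n, D m n <-> E m n.
End Tensor.

Definition is_groupoid_quantale (A Q : frame)
    (mul : Q -> Q -> Q) (inv : Q -> Q)
    (lact : A -> Q -> Q) (ract : Q -> A -> Q)
    (suppQ : Q -> A) (ups : Q -> A) : Prop :=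
  is_involutive_quantale mul inv /\
  is_AA_bimod lact ract /\
  (forall a x y, mul (lact a x) y = lact a (mul x y)) /\
  (forall x a y, mul (ract x a) y = mul x (lact a y)) /\
  (forall x y a, ract (mul x y) a = mul x (ract y a)) /\
  (forall a x b, inv (ract (lact a x) b) = ract (lact b (inv x)) a) /\
  (forall a q m, fmeet (lact a q) m = lact a (fmeet q m)) /\
  (forall a q m, fmeet m (ract q a) = ract (fmeet q m) a) /\
  sup_hom suppQ /\
  suppQ (ftop Q) = ftop A /\
  (forall x y, fle (lact (suppQ x) y) (mul (mul x (inv x)) y)) /\
  (forall x, lact (suppQ x) x = x) /\
  (forall a x, suppQ (lact a x) = fmeet a (suppQ x)) /\
  frame_hom ups /\
  (forall a, ups (lact a (ftop Q)) = a) /\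
  (forall a, ups (ract (ftop Q) a) = a) /\
  (* the right adjoint of the multiplication Q (x)_A Q -> Q preserves joins *)
  (let mu (D : Q -> Q -> Prop) : Q :=
       fsup (fun z => exists x y, D x y /\ z = mul x y) in
   let radj (q : Q) : Q -> Q -> Prop :=
       tjoin ract lact (fun D => tclosed ract lact D /\ fle (mu D) q) in
   forall P : Q -> Prop,
     teq (radj (fsup P)) (tjoin ract lact (fun E => exists q, P q /\ E = radj q))) /\
  (forall a : Q,
     fsup (fun z => exists x y, fle (mul x y) a /\ z = lact (ups x) y) = a) /\
  (forall a : Q,
     lact (ups a) (ftop Q) = fsup (fun x => fle (mul x (inv x)) a)).

Definition is_Q_module (A Q X : frame) (mul : Q -> Q -> Q)
    (lactQ : A -> Q -> Q) (ractQ : Q -> A -> Q)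
    (act : Q -> X -> X) (lactX : A -> X -> X) : Prop :=
  (forall q r x, act (mul q r) x = act q (act r x)) /\
  (forall (S : Q -> Prop) x, act (fsup S) x = fsup (img (fun q => act q x) S)) /\
  (forall q (S : X -> Prop), act q (fsup S) = fsup (img (act q) S)) /\
  is_unital_left_Amod lactX /\
  (forall a q x, act (lactQ a q) x = lactX a (act q x)) /\
  (forall q a x, act (ractQ q a) x = act q (lactX a x)) /\
  (forall a x y, lactX a (fmeet x y) = fmeet (lactX a x) y).

Definition is_preHilbert (A Q X : frame) (mul : Q -> Q -> Q) (inv : Q -> Q)
    (lactQ : A -> Q -> Q) (act : Q -> X -> X) (lactX : A -> X -> X)
    (inner : X -> X -> Q) : Prop :=
  (forall q x y, inner (act q x) y = mul q (inner x y)) /\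
  (forall a x, lactQ a (inner x (ftop X)) = inner (lactX a x) (ftop X)) /\
  (forall (S : X -> Prop) y, inner (fsup S) y = fsup (img (fun x => inner x y) S)) /\
  (forall x y, inner x y = inv (inner y x)).

Definition is_stably_supported (A Q X : frame)
    (suppQ : Q -> A) (act : Q -> X -> X) (lactX : A -> X -> X)
    (inner : X -> X -> Q) (suppX : X -> A) : Prop :=
  (forall x y, fle x y -> fle (suppX x) (suppX y)) /\
  suppX (ftop X) = ftop A /\
  (forall x, fle (lactX (suppX x) (ftop X)) (act (inner x x) (ftop X))) /\
  (forall x, lactX (suppX x) x = x) /\
  (forall q x, fle (suppX (act q x)) (suppQ q)).

Definition is_Q_locale (A Q X : frame)
    (mul : Q -> Q -> Q) (inv : Q -> Q)
    (lactQ : A -> Q -> Q) (ractQ : Q -> A -> Q)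
    (suppQ : Q -> A) (ups : Q -> A)
    (act : Q -> X -> X) (lactX : A -> X -> X)
    (inner : X -> X -> Q) (suppX : X -> A) : Prop :=
  is_Q_module mul lactQ ractQ act lactX /\
  is_preHilbert mul inv lactQ act lactX inner /\
  is_stably_supported suppQ act lactX inner suppX /\
  (* alpha_* : X -> Q (x)_A X, alpha_*(x) = \/_{q.y <= x} q (x) y, preserves joins *)
  (let alpha (x : X) : Q -> X -> Prop :=
       tjoin ractQ lactX
         (fun E => exists q y, fle (act q y) x /\ E = tpure ractQ lactX q y) in
   forall P : X -> Prop,
     teq (alpha (fsup P)) (tjoin ractQ lactX (fun E => exists x, P x /\ E = alpha x))) /\
  (forall x : X,
     fsup (fun z => exists q y, fle (act q y) x /\ z = lactX (ups q) y) = x).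

(* Stability of the support of X gives [1_Q . 1_X = 1_X]; the support axioms of Q then give
   [supp q |> 1_X = q . 1_X] (one inclusion from [supp q |> y <= q q^* y], the other from
   [supp q |> q = q]). Finally the A-action commutes with meets on one side, so
   [a |> z = a |> (1_X /\ z) = (a |> 1_X) /\ z]. *)
From Stdlib Require Import Setoid.

Lemma sup_hom_mono {L M : frame} {f : L -> M} :
  sup_hom f -> forall x y, fle x y -> fle (f x) (f y).
Proof.
  intros Hf x y Hxy.
  assert (Hy : y = fsup (fun z => z = x \/ z = y)).
  { apply fle_anti.
    - apply fsup_ub; auto.
    - apply fsup_least; intros z [-> | ->]; auto using fle_refl. }
  rewrite Hy, Hf. apply fsup_ub. exists x; auto.
Qed.

Lemma fle_top (L : frame) (x : L) : fle x (ftop L).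
Proof. apply fsup_ub; exact I. Qed.

Lemma fmeet_topl (L : frame) (x : L) : fmeet (ftop L) x = x.
Proof.
  apply fle_anti.
  - exact (proj2 (proj1 (fmeet_glb _ _ _) (fle_refl _))).
  - apply fmeet_glb; auto using fle_top, fle_refl.
Qed.

Section StablySupportedModule.

Variables (A Q X : frame) (mul : Q -> Q -> Q) (inv : Q -> Q)
  (lactQ : A -> Q -> Q) (ractQ : Q -> A -> Q) (suppQ : Q -> A)
  (act : Q -> X -> X) (lactX : A -> X -> X)
  (inner : X -> X -> Q) (suppX : X -> A).

Hypothesis Hmod : is_Q_module mul lactQ ractQ act lactX.
Hypothesis Hstab : is_stably_supported suppQ act lactX inner suppX.

Lemma act_monol (p r : Q) (x : X) : fle p r -> fle (act p x) (act r x).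
Proof.
  destruct Hmod as (_ & act_supl & _).
  apply (sup_hom_mono (fun S => act_supl S x)).
Qed.

Lemma act_monor (p : Q) (x y : X) : fle x y -> fle (act p x) (act p y).
Proof.
  destruct Hmod as (_ & _ & act_supr & _).
  apply (sup_hom_mono (act_supr p)).
Qed.

Lemma lactX_monor (a : A) (x y : X) : fle x y -> fle (lactX a x) (lactX a y).
Proof.
  destruct Hmod as (_ & _ & _ & ((lactX_supr & _) & _) & _).
  apply (sup_hom_mono (lactX_supr a)).
Qed.

Lemma lactX_meet_top (a : A) (z : X) : lactX a z = fmeet (lactX a (ftop X)) z.
Proof.
  destruct Hmod as (_ & _ & _ & _ & _ & _ & lactX_meet).
  rewrite <- lactX_meet, fmeet_topl. reflexivity.
Qed.

Lemma act_top_top : act (ftop Q) (ftop X) = ftop X.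
Proof.
  destruct Hmod as (_ & _ & _ & (_ & lactX_top) & _).
  destruct Hstab as (_ & suppX_top & suppX_le & _).
  apply fle_anti; [apply fle_top |].
  apply fle_trans with (act (inner (ftop X) (ftop X)) (ftop X));
    [| apply act_monol, fle_top].
  rewrite <- (lactX_top (ftop X)) at 1. rewrite <- suppX_top. apply suppX_le.
Qed.

Hypothesis suppQ_le : forall x y, fle (lactQ (suppQ x) y) (mul (mul x (inv x)) y).
Hypothesis suppQ_fix : forall x, lactQ (suppQ x) x = x.

Lemma lactX_suppQ_top (q : Q) : lactX (suppQ q) (ftop X) = act q (ftop X).
Proof.
  destruct Hmod as (act_mul & _ & _ & _ & act_lactQ & _).
  apply fle_anti.
  - rewrite <- act_top_top at 1. rewrite <- act_lactQ.
    apply fle_trans with (act (mul (mul q (inv q)) (ftop Q)) (ftop X));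
      [apply act_monol, suppQ_le |].
    rewrite !act_mul. apply act_monor, fle_top.
  - rewrite <- (suppQ_fix q) at 1. rewrite act_lactQ. apply lactX_monor, fle_top.
Qed.

Lemma lactX_suppQ (q : Q) (z : X) :
  lactX (suppQ q) z = fmeet (act q (ftop X)) z.
Proof. rewrite <- lactX_suppQ_top. apply lactX_meet_top. Qed.

End StablySupportedModule.

Theorem corollary5p2 (A Q X : frame)
    (mul : Q -> Q -> Q) (inv : Q -> Q)
    (lactQ : A -> Q -> Q) (ractQ : Q -> A -> Q)
    (suppQ : Q -> A) (ups : Q -> A)
    (act : Q -> X -> X) (lactX : A -> X -> X)
    (inner : X -> X -> Q) (suppX : X -> A)
    (HQ : is_groupoid_quantale mul inv lactQ ractQ suppQ ups)
    (HX : is_Q_locale mul inv lactQ ractQ suppQ ups act lactX inner suppX) :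
  forall (q : Q) (z : X), lactX (suppQ q) z = fmeet (act q (ftop X)) z.
Proof.
  destruct HQ as (_ & _ & _ & _ & _ & _ & _ & _ & _ & _ & suppQ_le & suppQ_fix & _).
  destruct HX as (Hmod & _ & Hstab & _).
  intros q z; eapply lactX_suppQ; eassumption.
Qed.
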